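(* Let a nondegenerate triangle with circumradius $R$ be circumscribed about a central conic one of whose foci coincides with the circumcenter of the triangle, and let $a$ be the semi-major axis of the conic (half the distance between its vertices on the focal axis). Then $R=2a$.
   Context: A central conic is a non-degenerate ellipse or hyperbola. A triangle is circumscribed about a conic if each of its three sidelines is tangent to the conic. *)

From Stdlib Require Import Reals.
Open Scope R_scope.

Definition pt : Type := (R * R)%type.

Definition psub (P Q : pt) : pt := (fst P - fst Q, snd P - snd Q).
Definition padd (P Q : pt) : pt := (fst P + fst Q, snd P + snd Q).
Definition pscale (k : R) (P : pt) : pt := (k * fst P, k * snd P).
Definition dot (P Q : pt) : R := fst P * fst Q + snd P * snd Q.
Definition cross (P Q : pt) : R := fst P * snd Q - snd P * fst Q.
Definition edist (P Q : pt) : R := sqrt (dot (psub P Q) (psub P Q)).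

Definition collinear (A B C : pt) : Prop := cross (psub B A) (psub C A) = 0.

Definition on_line (P Q X : pt) : Prop := cross (psub Q P) (psub X P) = 0.

(* Central conics: in an orthonormal frame (center, u, v) with v = u rotated by
   +90 degrees, the conic is  x^2/a^2 + eps * y^2/b^2 = 1 with eps = 1 (ellipse)
   or eps = -1 (hyperbola).  The focal axis is the x-axis (direction u), so the
   vertices on the focal axis are center +- a u and a is the semi-major axis. *)
Inductive conic_kind := Ellipse | Hyperbola.

Definition ksign (k : conic_kind) : R :=
  match k with Ellipse => 1 | Hyperbola => -1 end.

Record central_conic := CentralConic {
  cc_center : pt;
  cc_u : pt;
  cc_kind : conic_kind;
  cc_a : R;
  cc_b : R
}.

Definition cc_v (K : central_conic) : pt := (- snd (cc_u K), fst (cc_u K)).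

Definition wf_conic (K : central_conic) : Prop :=
  dot (cc_u K) (cc_u K) = 1 /\ 0 < cc_a K /\ 0 < cc_b K /\
  (cc_kind K = Ellipse -> cc_b K <= cc_a K).

Definition cx (K : central_conic) (X : pt) : R := dot (psub X (cc_center K)) (cc_u K).
Definition cy (K : central_conic) (X : pt) : R := dot (psub X (cc_center K)) (cc_v K).

Definition on_conic (K : central_conic) (X : pt) : Prop :=
  (cx K X)^2 / (cc_a K)^2 + ksign (cc_kind K) * (cy K X)^2 / (cc_b K)^2 = 1.

Definition focal_c (K : central_conic) : R :=
  sqrt ((cc_a K)^2 - ksign (cc_kind K) * (cc_b K)^2).

Definition is_focus (K : central_conic) (F : pt) : Prop :=
  F = padd (cc_center K) (pscale (focal_c K) (cc_u K)) \/
  F = padd (cc_center K) (pscale (- focal_c K) (cc_u K)).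

(* The line through distinct P, Q is tangent to K: it passes through a point X
   of K and its direction is orthogonal to the gradient of the defining
   quadratic form at X (i.e. it is the tangent line of K at X). *)
Definition tangent_line (K : central_conic) (P Q : pt) : Prop :=
  P <> Q /\
  exists X, on_line P Q X /\ on_conic K X /\
    cx K X * dot (psub Q P) (cc_u K) / (cc_a K)^2
    + ksign (cc_kind K) * cy K X * dot (psub Q P) (cc_v K) / (cc_b K)^2 = 0.

(* The pedal curve of a central conic with respect to a focus is its auxiliary
   circle: the foot of the perpendicular from a focus to any tangent line lies
   at distance a from the center.  The circumcenter O is a focus equidistant
   from the two endpoints of each side, so these feet are the midpoints of the
   sides.  Hence the circle through the three midpoints, the nine-point circle,
   whose radius is R/2, has radius a. *)

From Stdlib Require Import Reals Lra Psatz.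
Open Scope R_scope.

Definition origin : pt := (0, 0).
Definition sqdist (P Q : pt) : R := dot (psub P Q) (psub P Q).
Definition midpoint (P Q : pt) : pt := pscale (/ 2) (padd P Q).

Ltac pt_unfold :=
  unfold origin, sqdist, midpoint, dot, cross, psub, padd, pscale in *;
  cbn [fst snd] in *.

Lemma eq0_of_mul_nonzero (k x : R) : k <> 0 -> k * x = 0 -> x = 0.
Proof. intros Hk H; destruct (Rmult_integral _ _ H); [contradiction | assumption]. Qed.

Lemma sqdist_sym (P Q : pt) : sqdist P Q = sqdist Q P.
Proof. destruct P, Q; pt_unfold; ring. Qed.

Lemma sqdist_nonneg (P Q : pt) : 0 <= sqdist P Q.
Proof. destruct P, Q; pt_unfold; apply Rplus_le_le_0_compat; apply Rle_0_sqr. Qed.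

Lemma sqdist_eq0 (P Q : pt) : sqdist P Q = 0 -> P = Q.
Proof.
destruct P as [p1 p2], Q as [q1 q2]; pt_unfold; intros H.
pose proof (Rle_0_sqr (p1 - q1)); pose proof (Rle_0_sqr (p2 - q2)); unfold Rsqr in *.
assert (E1 : (p1 - q1) * (p1 - q1) = 0) by lra.
assert (E2 : (p2 - q2) * (p2 - q2) = 0) by lra.
apply Rmult_integral in E1; apply Rmult_integral in E2.
f_equal; lra.
Qed.

Lemma sqdist_refl (P : pt) : sqdist P P = 0.
Proof. destruct P; pt_unfold; ring. Qed.

Lemma nonzero_vector_cases (d : pt) : d <> origin -> fst d <> 0 \/ snd d <> 0.
Proof.
destruct d as [d1 d2]; cbn; intros Hd.
destruct (Req_dec d1 0) as [->|H1]; [|now left].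
destruct (Req_dec d2 0) as [->|H2]; [|now right].
contradiction.
Qed.

Lemma dot_eq0_of_cross_eq0 (d e n : pt) :
  d <> origin -> cross d e = 0 -> dot n d = 0 -> dot n e = 0.
Proof.
intros Hd Hc Hn; destruct (nonzero_vector_cases d Hd) as [H|H];
  apply (eq0_of_mul_nonzero _ _ H).
- transitivity (fst e * dot n d + snd n * cross d e);
    [destruct d, e, n; pt_unfold; ring | rewrite Hc, Hn; ring].
- transitivity (snd e * dot n d - fst n * cross d e);
    [destruct d, e, n; pt_unfold; ring | rewrite Hc, Hn; ring].
Qed.

Lemma cross_eq0_of_orthogonal (d v w : pt) :
  d <> origin -> dot v d = 0 -> dot w d = 0 -> cross v w = 0.
Proof.
intros Hd Hv Hw; destruct (nonzero_vector_cases d Hd) as [H|H];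
  apply (eq0_of_mul_nonzero _ _ H).
- transitivity (snd w * dot v d - snd v * dot w d);
    [destruct d, v, w; pt_unfold; ring | rewrite Hv, Hw; ring].
- transitivity (fst v * dot w d - fst w * dot v d);
    [destruct d, v, w; pt_unfold; ring | rewrite Hv, Hw; ring].
Qed.

Lemma orthogonal_independent_eq0 (d e w : pt) :
  cross d e <> 0 -> dot w d = 0 -> dot w e = 0 -> w = origin.
Proof.
intros Hde Hd He; destruct w as [w1 w2]; unfold origin; f_equal;
  apply (eq0_of_mul_nonzero _ _ Hde).
- transitivity (snd e * dot (w1, w2) d - snd d * dot (w1, w2) e);
    [destruct d, e; pt_unfold; ring | rewrite Hd, He; ring].
- transitivity (fst d * dot (w1, w2) e - fst e * dot (w1, w2) d);
    [destruct d, e; pt_unfold; ring | rewrite Hd, He; ring].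
Qed.

Lemma midpoint_sub_orthogonal (P Q F : pt) :
  sqdist P F = sqdist Q F -> dot (psub (midpoint P Q) F) (psub Q P) = 0.
Proof.
intros H; transitivity ((sqdist Q F - sqdist P F) / 2);
  [destruct P, Q, F; pt_unfold; field | rewrite H; field].
Qed.

Lemma equidistant_sub_orthogonal (P Q Z W : pt) :
  sqdist P Z = sqdist Q Z -> sqdist P W = sqdist Q W ->
  dot (psub Z W) (psub Q P) = 0.
Proof.
intros HZ HW;
  transitivity ((sqdist P Z - sqdist Q Z - (sqdist P W - sqdist Q W)) / 2);
  [destruct P, Q, Z, W; pt_unfold; field | rewrite HZ, HW; field].
Qed.

Lemma circumcenter_unique (P Q S Z W : pt) :
  ~ collinear P Q S ->
  sqdist P Z = sqdist Q Z -> sqdist P Z = sqdist S Z ->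
  sqdist P W = sqdist Q W -> sqdist P W = sqdist S W ->
  Z = W.
Proof.
intros Hncol HZQ HZS HWQ HWS.
assert (H0 : psub Z W = origin).
{ apply (orthogonal_independent_eq0 (psub Q P) (psub S P)); [exact Hncol | |];
    now apply equidistant_sub_orthogonal. }
destruct Z, W; unfold psub, origin in H0; cbn in H0; injection H0 as H1 H2.
f_equal; lra.
Qed.

Lemma collinear_midpoints (A B C : pt) :
  collinear (midpoint A B) (midpoint B C) (midpoint C A) -> collinear A B C.
Proof.
unfold collinear; intros H.
transitivity (4 * cross (psub (midpoint B C) (midpoint A B))
                        (psub (midpoint C A) (midpoint A B)));
  [destruct A, B, C; pt_unfold; field | rewrite H; ring].
Qed.

(* The image of [O] under the homothety of ratio -1/2 centered at the
   centroid of [ABC]. *)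
Definition ninepoint_center (A B C O : pt) : pt :=
  pscale (/ 2) (psub (padd A (padd B C)) O).

Lemma ninepoint_center_rotate (A B C O : pt) :
  ninepoint_center B C A O = ninepoint_center A B C O.
Proof. destruct A, B, C, O; unfold ninepoint_center; pt_unfold; f_equal; ring. Qed.

Lemma sqdist_midpoint_ninepoint_center (A B C O : pt) :
  sqdist (midpoint A B) (ninepoint_center A B C O) = sqdist C O / 4.
Proof. destruct A, B, C, O; unfold ninepoint_center; pt_unfold; field. Qed.

Lemma midpoint_circle_radius (A B C O Z : pt) (r : R) :
  ~ collinear A B C ->
  sqdist A O = sqdist B O -> sqdist B O = sqdist C O ->
  sqdist (midpoint A B) Z = r -> sqdist (midpoint B C) Z = r ->
  sqdist (midpoint C A) Z = r ->
  4 * r = sqdist A O.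
Proof.
intros Hncol HAB HBC MAB MBC MCA.
set (N := ninepoint_center A B C O).
assert (NAB : sqdist (midpoint A B) N = sqdist C O / 4)
  by apply sqdist_midpoint_ninepoint_center.
assert (NBC : sqdist (midpoint B C) N = sqdist A O / 4).
{ unfold N; rewrite <- (ninepoint_center_rotate A B C O); apply sqdist_midpoint_ninepoint_center. }
assert (NCA : sqdist (midpoint C A) N = sqdist B O / 4).
{ unfold N; rewrite (ninepoint_center_rotate C A B O); apply sqdist_midpoint_ninepoint_center. }
assert (HZN : Z = N).
{ apply (circumcenter_unique (midpoint A B) (midpoint B C) (midpoint C A)).
  - intros H; exact (Hncol (collinear_midpoints A B C H)).
  - congruence.
  - congruence.
  - rewrite NAB, NBC; lra.
  - rewrite NAB, NCA; lra. }
rewrite HZN, NAB in MAB; lra.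
Qed.

(* The line [dot n m = 1] is tangent to [x^2/a^2 + s y^2/b^2 = 1] exactly when
   [n] lies on the dual conic [a^2 n1^2 + s b^2 n2^2 = 1]; [m] is the foot of
   the perpendicular dropped on it from the focus [(f, 0)]. *)
Lemma pedal_foot_on_auxiliary_circle (a b s f : R) (n m : pt) :
  a^2 * fst n ^ 2 + s * b^2 * snd n ^ 2 = 1 ->
  f^2 = a^2 - s * b^2 ->
  dot n m = 1 ->
  cross (psub m (f, 0)) n = 0 ->
  sqdist m origin = a^2.
Proof.
destruct n as [n1 n2], m as [m1 m2]; pt_unfold.
intros Hdual Hf Hdot Hcross.
set (N := n1^2 + n2^2).
assert (HN : N <> 0).
{ intros E; assert (n1 = 0) by (unfold N in E; nra); assert (n2 = 0) by (unfold N in E; nra).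
  subst; lra. }
assert (Hm1 : N * (m1 - f) = n1 * (1 - f * n1)).
{ transitivity (n1 * (n1 * m1 + n2 * m2 - f * n1) + n2 * ((m1 - f) * n2 - (m2 - 0) * n1));
    [unfold N; ring | rewrite Hdot, Hcross; ring]. }
assert (Hm2 : N * m2 = n2 * (1 - f * n1)).
{ transitivity (n2 * (n1 * m1 + n2 * m2 - f * n1) - n1 * ((m1 - f) * n2 - (m2 - 0) * n1));
    [unfold N; ring | rewrite Hdot, Hcross; ring]. }
assert (Hsb : s * b^2 * N = 1 - f^2 * n1^2) by (rewrite Hf; unfold N; lra).
replace m1 with (f + n1 * (1 - f * n1) / N)
  by (apply (Rmult_eq_reg_l N); [rewrite <- Hm1; field | ]; exact HN).
replace m2 with (n2 * (1 - f * n1) / N)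
  by (apply (Rmult_eq_reg_l N); [rewrite <- Hm2; field | ]; exact HN).
replace (a^2) with (f^2 + s * b^2) by lra.
replace (s * b^2) with ((1 - f^2 * n1^2) / N)
  by (apply (Rmult_eq_reg_l N); [rewrite <- Hsb; field | ]; exact HN).
unfold N in *; field; exact HN.
Qed.

Lemma tangent_midpoint_on_auxiliary_circle_std (a b s f : R) (p q x : pt) :
  0 < a -> 0 < b -> s * s = 1 -> f^2 = a^2 - s * b^2 -> p <> q ->
  cross (psub q p) (psub x p) = 0 ->
  fst x ^ 2 / a^2 + s * snd x ^ 2 / b^2 = 1 ->
  fst x * fst (psub q p) / a^2 + s * snd x * snd (psub q p) / b^2 = 0 ->
  sqdist p (f, 0) = sqdist q (f, 0) ->
  sqdist (midpoint p q) origin = a^2.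
Proof.
intros Ha Hb Hs Hf Hpq Hline Hconic Htan Heq.
set (n := (fst x / a^2, s * snd x / b^2)).
set (d := psub q p) in *.
set (m := midpoint p q).
assert (Hd : d <> origin).
{ intros E; apply Hpq; unfold d, origin, psub in E; destruct p, q; cbn in E.
  injection E as E1 E2; f_equal; lra. }
assert (Hnd : dot n d = 0) by (rewrite <- Htan; unfold n, dot; cbn [fst snd]; field; lra).
assert (Hmx : dot n (psub m x) = 0).
{ apply (dot_eq0_of_cross_eq0 d); [exact Hd | | exact Hnd].
  transitivity (- cross d (psub x p));
    [unfold m, d; destruct p, q, x; pt_unfold; field | rewrite Hline; ring]. }
apply (pedal_foot_on_auxiliary_circle a b s f n); [| exact Hf | |].
- rewrite <- Hconic; unfold n; cbn [fst snd].
  replace (s * b^2 * (s * snd x / b^2) ^ 2) with ((s * s) * (s * snd x ^ 2 / b^2))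
    by (field; lra).
  rewrite Hs; field; lra.
- transitivity (dot n (psub m x) + dot n x);
    [destruct m, x; pt_unfold; ring | rewrite Hmx, <- Hconic; unfold n, dot; cbn [fst snd]; field; lra].
- apply (cross_eq0_of_orthogonal d); [exact Hd | | exact Hnd].
  now apply midpoint_sub_orthogonal.
Qed.

Definition frame (K : central_conic) (X : pt) : pt := (cx K X, cy K X).

Ltac conic_unfold K :=
  destruct K as [[z1 z2] [u1 u2] k a b];
  unfold frame, cx, cy, cc_v in *; cbn [cc_center cc_u cc_a cc_b cc_kind] in *.

Lemma frame_sqdist (K : central_conic) (P Q : pt) :
  dot (cc_u K) (cc_u K) = 1 -> sqdist (frame K P) (frame K Q) = sqdist P Q.
Proof.
intros Hu; transitivity (sqdist P Q * dot (cc_u K) (cc_u K)); [|rewrite Hu; ring].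
conic_unfold K; destruct P, Q; pt_unfold; ring.
Qed.

Lemma frame_inj (K : central_conic) (P Q : pt) :
  dot (cc_u K) (cc_u K) = 1 -> frame K P = frame K Q -> P = Q.
Proof.
intros Hu E; apply sqdist_eq0.
now rewrite <- (frame_sqdist K P Q Hu), E, sqdist_refl.
Qed.

Lemma frame_cross (K : central_conic) (P Q X : pt) :
  dot (cc_u K) (cc_u K) = 1 ->
  cross (psub (frame K Q) (frame K P)) (psub (frame K X) (frame K P))
  = cross (psub Q P) (psub X P).
Proof.
intros Hu; transitivity (cross (psub Q P) (psub X P) * dot (cc_u K) (cc_u K));
  [|rewrite Hu; ring].
conic_unfold K; destruct P, Q, X; pt_unfold; ring.
Qed.

Lemma frame_sub (K : central_conic) (P Q : pt) :
  psub (frame K Q) (frame K P) = (dot (psub Q P) (cc_u K), dot (psub Q P) (cc_v K)).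
Proof. conic_unfold K; destruct P, Q; pt_unfold; f_equal; ring. Qed.

Lemma frame_midpoint (K : central_conic) (P Q : pt) :
  frame K (midpoint P Q) = midpoint (frame K P) (frame K Q).
Proof. conic_unfold K; destruct P, Q; pt_unfold; f_equal; field. Qed.

Lemma frame_center (K : central_conic) : frame K (cc_center K) = origin.
Proof. conic_unfold K; pt_unfold; f_equal; ring. Qed.

Lemma frame_focal_axis (K : central_conic) (f : R) :
  dot (cc_u K) (cc_u K) = 1 ->
  frame K (padd (cc_center K) (pscale f (cc_u K))) = (f, 0).
Proof.
intros Hu; conic_unfold K; pt_unfold; f_equal; [|ring].
transitivity (f * (u1 * u1 + u2 * u2)); [ring | rewrite Hu; ring].
Qed.

Lemma ksign_sq (k : conic_kind) : ksign k * ksign k = 1.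
Proof. destruct k; cbn; ring. Qed.

Lemma focus_on_focal_axis (K : central_conic) (F : pt) :
  wf_conic K -> is_focus K F ->
  exists f, f^2 = cc_a K ^ 2 - ksign (cc_kind K) * cc_b K ^ 2 /\
            F = padd (cc_center K) (pscale f (cc_u K)).
Proof.
intros [_ [Ha [Hb Hle]]] HF.
assert (Hc : focal_c K ^ 2 = cc_a K ^ 2 - ksign (cc_kind K) * cc_b K ^ 2).
{ unfold focal_c; rewrite <- Rsqr_pow2; apply Rsqr_sqrt.
  destruct (cc_kind K); cbn; [specialize (Hle eq_refl) |]; nra. }
destruct HF as [->| ->]; [exists (focal_c K) | exists (- focal_c K)];
  split; auto; rewrite <- Hc; ring.
Qed.

Lemma tangent_midpoint_on_auxiliary_circle (K : central_conic) (P Q F : pt) :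
  wf_conic K -> tangent_line K P Q -> is_focus K F -> sqdist P F = sqdist Q F ->
  sqdist (midpoint P Q) (cc_center K) = cc_a K ^ 2.
Proof.
intros Hw [HPQ [X [Hline [Hconic Htan]]]] HF Heq.
destruct (focus_on_focal_axis K F Hw HF) as [f [Hf ->]].
destruct Hw as [Hu [Ha [Hb _]]].
rewrite <- (frame_sqdist K _ _ Hu), frame_midpoint, frame_center.
apply (tangent_midpoint_on_auxiliary_circle_std
         (cc_a K) (cc_b K) (ksign (cc_kind K)) f _ _ (frame K X)); auto.
- apply ksign_sq.
- intros E; exact (HPQ (frame_inj K P Q Hu E)).
- now rewrite frame_cross.
- now rewrite frame_sub.
- now rewrite <- (frame_focal_axis K f Hu), !frame_sqdist.
Qed.

Lemma sqdist_of_edist_eq (O P Q : pt) : edist O P = edist O Q -> sqdist P O = sqdist Q O.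
Proof.
intros H; rewrite (sqdist_sym P), (sqdist_sym Q).
apply sqrt_inj; [apply sqdist_nonneg | apply sqdist_nonneg | exact H].
Qed.

Theorem corollary2p4 (K : central_conic) (A B C Oc : pt) :
  wf_conic K ->
  ~ collinear A B C ->
  tangent_line K A B -> tangent_line K B C -> tangent_line K C A ->
  edist Oc A = edist Oc B -> edist Oc B = edist Oc C ->
  is_focus K Oc ->
  edist Oc A = 2 * cc_a K.
Proof.
intros Hw Hncol TAB TBC TCA EAB EBC HF.
pose proof (sqdist_of_edist_eq _ _ _ EAB) as SAB.
pose proof (sqdist_of_edist_eq _ _ _ EBC) as SBC.
pose proof (tangent_midpoint_on_auxiliary_circle K A B Oc Hw TAB HF SAB) as MAB.
pose proof (tangent_midpoint_on_auxiliary_circle K B C Oc Hw TBC HF SBC) as MBC.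
pose proof (tangent_midpoint_on_auxiliary_circle K C A Oc Hw TCA HF
              (eq_sym (eq_trans SAB SBC))) as MCA.
pose proof (midpoint_circle_radius A B C Oc _ _ Hncol SAB SBC MAB MBC MCA) as H4.
assert (Ha : 0 < cc_a K) by apply Hw.
change (sqrt (sqdist Oc A) = 2 * cc_a K).
rewrite sqdist_sym, <- H4, <- sqrt_pow2 by lra.
f_equal; ring.
Qed.
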